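(* Let $A=\sum_{k=0}^Na_k\partial^k\in\mathcal V[\partial]$ be a hereditary differential operator of degree $N$. Then for all $0\le k\le N$, $d(a_k)\le N+1$ (the inequality being vacuous when $a_k$ is a quasiconstant).
   Context: $\mathcal V$ is an algebra of differential functions in one variable $u$ (commutative $\mathbb C$-algebra containing $R=\mathbb C[u,u',\dots]$ with commuting derivations $\partial/\partial u^{(n)}$ extending those of $R$ and $\partial/\partial x$ commuting with them and vanishing on $R$, each element having finitely many nonzero partial derivatives); total derivative $\partial=\sum_nu^{(n+1)}\frac{\partial}{\partial u^{(n)}}+\frac{\partial}{\partial x}$. Standing assumptions: $\mathcal V$ is a normal domain with fraction field $\mathcal K$; $\mathcal C=\ker\partial$ is algebraically closed. The differential order is $d(F)=\max\{n\ge0:\partial F/\partial u^{(n)}\ne0\}$; $F$ is a quasiconstant if this set is empty. $X_F=\sum_nF^{(n)}\frac{\partial}{\partial u^{(n)}}$; $D_F=\sum_n\frac{\partial F}{\partial u^{(n)}}\partial^n$. Differential operators with $\partial a=a\partial+a'$; $X_F$ acts on operators coefficientwise; $\mathcal L_F(L)=X_F(L)-[D_F,L]$. A differential operator $A$ is hereditary if $\mathcal L_{A(G)}(A)=A\,\mathcal L_G(A)$ for all $G\in\mathcal V$. *)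

From HB Require Import structures.
From mathcomp Require Import all_boot all_order all_algebra.
From mathcomp Require Import reals complex.
Set Implicit Arguments. Unset Strict Implicit. Unset Printing Implicit Defensive.
Import Order.TTheory GRing.Theory Num.Theory.
Local Open Scope ring_scope.

(* The base field C is the complex numbers, realised as  R[i] = complex R  for
   an arbitrary  R : realType  (every realType is the real line).
   A C-algebra is an integral domain V together with a ring morphism
   emb : C -> V. *)

Record dfdata (V : Type) := DFData {
  uvar : nat -> V;          (* uvar n = u^(n) *)
  pder : nat -> V -> V;     (* pder n = partial derivative d/du^(n) *)
  xder : V -> V;
  pbound : V -> nat         (* pder n f = 0 whenever pbound f <= n *)
}.

Definition is_derivation (V : comPzRingType) (D : V -> V) : Prop :=
  (forall a b : V, D (a + b) = D a + D b) /\
  (forall a b : V, D (a * b) = D a * b + a * D b).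

(* V contains R = C[u,u',...] via emb and uvar (algebraic independence of the
   u^(n) over C follows from the other axioms since V is a domain and C has
   characteristic 0); the pder n are commuting derivations extending
   d/du^(n) on R; xder is a derivation commuting with them and vanishing on R;
   every element has finitely many nonzero partial derivatives (bounded by
   pbound). *)
Definition diff_fun_alg (R : realType) (V : idomainType)
    (emb : {rmorphism R[i] -> V}) (D : dfdata V) : Prop :=
  [/\ (forall n, is_derivation (pder D n)) /\ is_derivation (xder D),
      (forall n (c : R[i]), pder D n (emb c) = 0) /\ (forall c : R[i], xder D (emb c) = 0),
      (forall n m, pder D n (uvar D m) = (n == m)%:R) /\ (forall m, xder D (uvar D m) = 0),
      (forall n m f, pder D n (pder D m f) = pder D m (pder D n f)) /\
      (forall n f, pder D n (xder D f) = xder D (pder D n f)) &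
      forall f n, (pbound D f <= n)%N -> pder D n f = 0 ].

Section DiffFun.
Variable V : idomainType.
Variable D : dfdata V.

Definition dtot (f : V) : V :=
  \sum_(n < pbound D f) uvar D n.+1 * pder D n f + xder D f.

(* differential order: max {n | pder n F != 0}; equals 0 (harmlessly) for
   quasiconstants *)
Definition quasiconstant (F : V) : Prop := forall n, pder D n F = 0.
Definition dord (F : V) : nat := \max_(n < pbound D F | pder D n F != 0) n.

(* Differential operators  L = sum_k L`_k d^k  are represented by their
   coefficient polynomials  L : {poly V}  ('X^k standing for d^k).  Only the
   additive structure of {poly V} is used; the (noncommutative) composition of
   operators is opmul below, using  d a = a d + a'  i.e.
   (a d^i)(b d^j) = sum_l binom(i,l) a b^(l) d^(i+j-l). *)
Definition opmul (L M : {poly V}) : {poly V} :=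
  \sum_(i < size L) \sum_(j < size M) \sum_(l < i.+1)
     (L`_i * 'C(i, l)%:R * iter l dtot M`_j)%:P * 'X^(i + j - l).

Definition opapply (L : {poly V}) (G : V) : V :=
  \sum_(k < size L) L`_k * iter k dtot G.

Definition evX (F g : V) : V :=
  \sum_(n < pbound D g) iter n dtot F * pder D n g.

Definition evXop (F : V) (L : {poly V}) : {poly V} :=
  \poly_(k < size L) evX F L`_k.

Definition frechet (F : V) : {poly V} := \poly_(n < pbound D F) pder D n F.

Definition lieder (F : V) (L : {poly V}) : {poly V} :=
  evXop F L - (opmul (frechet F) L - opmul L (frechet F)).

Definition hereditary (A : {poly V}) : Prop :=
  forall G : V, lieder (opapply A G) A = opmul A (lieder G A).

End DiffFun.

(* An element
   p/q (q != 0) of the fraction field is integral over V iff there is a monic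
   relation (p/q)^n + c_{n-1}(p/q)^{n-1} + ... + c_0 = 0, i.e. after clearing
   denominators  p^n + sum_{i<n} c_i p^i q^(n-i) = 0;  it lies in V iff q | p. *)
Definition normal_domain (V : idomainType) : Prop :=
  forall (p q : V) (n : nat) (c : nat -> V), q != 0 ->
    p ^+ n + \sum_(i < n) c i * p ^+ i * q ^+ (n - i) = 0 ->
    exists r : V, p = r * q.

Definition constants_alg_closed (V : idomainType) (D : dfdata V) : Prop :=
  (forall c : V, dtot D c = 0 -> c != 0 -> exists e : V, e * c = 1) /\
  (forall (n : nat) (c : nat -> V), (0 < n)%N ->
     (forall i, (i < n)%N -> dtot D (c i) = 0) ->
     exists r : V, dtot D r = 0 /\ r ^+ n + \sum_(i < n) c i * r ^+ i = 0).

From HB Require Import structures.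
From mathcomp Require Import all_boot all_order all_algebra.
From mathcomp Require Import reals complex.
From mathcomp Require Import zify ring.
Import GRing.Theory Num.Theory.

(* Let n be the largest differential order of a coefficient a_k of A and
   suppose n >= N + 2.  Apply the hereditary identity to G = u^(n+2).  The
   Frechet derivative of A(G) is K + A ∂^(n+2), where K has degree n and leading
   coefficient c = Σ_k c_k u^(k+n+2) with c_k = ∂a_k/∂u^(n).  As X_F(A) has
   degree at most N, only the commutator [K, A] survives in degree N + n - 1,
   and comparing these coefficients gives  a_N N c' = n c a_N'.  Differentiating
   with respect to u^(j+n+2) yields  a_N N (c_j + c_(j+1)') = n c_(j+1) a_N',
   which forces c_N = c_(N-1) = ... = c_0 = 0 when N > 0; when N = 0 the identity
   itself gives a_0' = 0, whence c_0 = ∂(a_0')/∂u^(n+1) = 0.  Either way no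
   coefficient has order n. *)

Set Implicit Arguments.
Unset Strict Implicit.
Local Open Scope ring_scope.

Section AdditiveMorphism.
Variables (U W : zmodType) (f : U -> W).
Hypothesis fD : {morph f : x y / x + y}.

Lemma addmorph0 : f 0 = 0.
Proof. by apply: (addrI (f 0)); rewrite -fD !addr0. Qed.

Lemma addmorphN : {morph f : x / - x}.
Proof. by move=> x; apply: (addrI (f x)); rewrite -fD !subrr addmorph0. Qed.

Lemma addmorphB : {morph f : x y / x - y}.
Proof. by move=> x y; rewrite fD addmorphN. Qed.

Lemma addmorphMn x k : f (x *+ k) = f x *+ k.
Proof. by elim: k => [|k IH]; rewrite ?mulr0n ?addmorph0 // !mulrS fD IH. Qed.

End AdditiveMorphism.

Lemma iter_addmorphD (U : zmodType) (f : U -> U) l :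
  {morph f : x y / x + y} -> {morph iter l f : x y / x + y}.
Proof. by move=> fD x y; elim: l => //= l ->; rewrite fD. Qed.

Section Derivation.
Variables (V : comPzRingType) (delta : V -> V).
Hypothesis delta_der : is_derivation delta.

Lemma derivationD : {morph delta : a b / a + b}.
Proof. by case: delta_der. Qed.

Lemma derivationM a b : delta (a * b) = delta a * b + a * delta b.
Proof. by case: delta_der. Qed.

Lemma derivation0 : delta 0 = 0.
Proof. exact: addmorph0 derivationD. Qed.

Lemma derivation_sum (I : Type) (r : seq I) (P : pred I) (F : I -> V) :
  delta (\sum_(i <- r | P i) F i) = \sum_(i <- r | P i) delta (F i).
Proof. exact: (big_morph delta derivationD derivation0). Qed.

Lemma derivation1 : delta 1 = 0.
Proof.
by move: (derivationM 1 1); rewrite !mulr1 mul1r -{1}[delta 1]addr0 => /addrI <-.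
Qed.

Lemma derivation_natr k : delta k%:R = 0.
Proof. by rewrite (addmorphMn derivationD) derivation1 mul0rn. Qed.

End Derivation.

Lemma sumr_ord_widen (W : nmodType) (F : nat -> W) a b : (a <= b)%N ->
  (forall i, (a <= i)%N -> F i = 0) -> \sum_(i < a) F i = \sum_(i < b) F i.
Proof.
move=> ab F0; rewrite (big_ord_widen b F ab) big_mkcond /=.
by apply: eq_bigr => i _; case: ltnP => // /F0.
Qed.

Lemma sumr_ord_delta (W : pzSemiRingType) (F : nat -> W) b n :
  \sum_(i < b) F i * (i == n :> nat)%:R = if (n < b)%N then F n else 0.
Proof.
by under eq_bigr => i _ do rewrite mulr_natr mulrb; rewrite -big_mkcond big_ord1_eq.
Qed.

Lemma sumr_binS (W : zmodType) (h : nat -> W) n :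
  \sum_(s < n.+2) h s *+ 'C(n.+1, s) =
  \sum_(s < n.+1) h s *+ 'C(n, s) + \sum_(s < n.+1) h s.+1 *+ 'C(n, s).
Proof.
rewrite big_ord_recl /=.
under eq_bigr => s _ do rewrite /bump /= add1n binS mulrnDr.
rewrite big_split /= addrA; congr (_ + _).
by rewrite [RHS]big_ord_recl big_ord_recr /= !bin0 (bin_small (ltnSn n)) mulr0n addr0.
Qed.

Lemma sumr_bin_convolution (W : zmodType) (g : nat -> W) i m :
  \sum_(l < m.+1) (\sum_(r < i.+1) g (l + r)%N *+ 'C(i, r)) *+ 'C(m, l) =
  \sum_(s < (i + m).+1) g s *+ 'C(i + m, s).
Proof.
elim: m g => [|m IH] g.
  by rewrite big_ord1 bin0 mulr1n addn0.
rewrite (sumr_binS (fun l => \sum_(r < i.+1) g (l + r)%N *+ 'C(i, r))).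
by rewrite addnS sumr_binS IH -(IH (fun s => g s.+1)).
Qed.

Section Monomials.
Variable R : nzRingType.

Lemma size_monomial_leq (c : R) k : (size (c%:P * 'X^k)%R <= k.+1)%N.
Proof. by rewrite mul_polyC (leq_trans (size_scale_leq _ _)) ?size_polyXn. Qed.

Lemma poly_top_split (L : {poly R}) p : (size L <= p.+1)%N ->
  L = (L`_p)%:P * 'X^p + (L - (L`_p)%:P * 'X^p) /\
  (size (L - (L`_p)%:P * 'X^p)%R <= p)%N.
Proof.
move=> sizeL; split; first by rewrite addrC subrK.
apply/leq_sizeP => j pj; rewrite coefB coefCM coefXn.
have [->|/eqP neq_jp] := eqVneq j p; first by rewrite mulr1 subrr.
by rewrite mulr0 subr0; apply/(leq_sizeP _ _ sizeL); lia.
Qed.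

Lemma poly_monomial_sum (P : {poly R}) : P = \sum_(i < size P) (P`_i)%:P * 'X^i.
Proof. by rewrite -{1}(coefK P) poly_def; apply: eq_bigr => i _; rewrite mul_polyC. Qed.

End Monomials.

Section DifferentialFunctions.
Variables (V : idomainType) (D : dfdata V).
Hypothesis pder_derivation : forall n, is_derivation (pder D n).
Hypothesis xder_derivation : is_derivation (xder D).
Hypothesis pder_uvar : forall n m, pder D n (uvar D m) = (n == m)%:R.
Hypothesis xder_uvar : forall m, xder D (uvar D m) = 0.
Hypothesis pderC : forall n m f, pder D n (pder D m f) = pder D m (pder D n f).
Hypothesis pder_xder : forall n f, pder D n (xder D f) = xder D (pder D n f).
Hypothesis pder_pbound : forall f n, (pbound D f <= n)%N -> pder D n f = 0.

Local Notation pd := (pder D).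
Local Notation u := (uvar D).
Local Notation dt := (dtot D).

Implicit Types (A L M : {poly V}) (f g : V).

Lemma pder0 n : pd n 0 = 0.
Proof. exact: derivation0. Qed.

Lemma dtot_widen b f : (pbound D f <= b)%N ->
  dt f = \sum_(n < b) u n.+1 * pd n f + xder D f.
Proof.
move=> fb; rewrite /dtot (@sumr_ord_widen _ (fun n => u n.+1 * pd n f) _ _ fb) //.
by move=> n /pder_pbound ->; rewrite mulr0.
Qed.

Lemma dtotD : {morph dt : f g / f + g}.
Proof.
move=> f g; pose b := (pbound D f + pbound D g + pbound D (f + g)%R)%N.
rewrite (@dtot_widen b f) ?(@dtot_widen b g) ?(@dtot_widen b (f + g));
  try by rewrite /b; lia.
rewrite (derivationD xder_derivation) addrACA -big_split /=; congr (_ + _).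
by apply: eq_bigr => n _; rewrite (derivationD (pder_derivation n)) mulrDr.
Qed.

Lemma dtot0 : dt 0 = 0.
Proof. exact: addmorph0 dtotD. Qed.

Lemma dtot1 : dt 1 = 0.
Proof.
rewrite /dtot (derivation1 xder_derivation) addr0 big1 // => n _.
by rewrite (derivation1 (pder_derivation n)) mulr0.
Qed.

Lemma iter_dtot0 l : iter l dt 0 = 0.
Proof. exact: addmorph0 (iter_addmorphD l dtotD). Qed.

Lemma iter_dtot1 l : (0 < l)%N -> iter l dt 1 = 0.
Proof. by case: l => // l _; rewrite iterSr /= dtot1 iter_dtot0. Qed.

Lemma pbound_uvar m : (m < pbound D (u m))%N.
Proof.
by rewrite ltnNge; apply/negP => /pder_pbound/eqP; rewrite pder_uvar eqxx oner_eq0.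
Qed.

Lemma dtot_uvar m : dt (u m) = u m.+1.
Proof.
rewrite (@dtot_widen (pbound D (u m))) // xder_uvar addr0.
under eq_bigr => n _ do rewrite pder_uvar.
by rewrite (sumr_ord_delta (fun n => u n.+1)) pbound_uvar.
Qed.

Lemma iter_dtot_uvar l m : iter l dt (u m) = u (l + m).
Proof. by elim: l => //= l ->; rewrite dtot_uvar. Qed.

Lemma pder_dtot j f :
  pd j (dt f) = (if j is j'.+1 then pd j' f else 0) + dt (pd j f).
Proof.
pose b := (pbound D f + pbound D (pd j f) + j.+1)%N.
have [fb pfb jb] : [/\ pbound D f <= b, pbound D (pd j f) <= b & j < b]%N.
  by split; rewrite /b; lia.
clearbody b; rewrite (dtot_widen fb) (dtot_widen pfb) (derivationD (pder_derivation j)).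
rewrite (derivation_sum (pder_derivation j)) pder_xder addrA; congr (_ + _).
under eq_bigr => i _ do rewrite (derivationM (pder_derivation j)) pder_uvar (pderC j i).
rewrite big_split /=; congr (_ + _); case: j {fb pfb} jb => [|j] jb.
  by rewrite big1 // => i _; rewrite mul0r.
under eq_bigr => i _ do rewrite eqSS mulrC eq_sym.
by rewrite (sumr_ord_delta (fun i => pd i f)) ltnW.
Qed.

Definition order_lt (f : V) (b : nat) := forall j, (b <= j)%N -> pd j f = 0.

Lemma order_lt_leq f b b' : (b <= b')%N -> order_lt f b -> order_lt f b'.
Proof. by move=> bb' fb j /(leq_trans bb') /fb. Qed.

Lemma order_ltM f g b : order_lt f b -> order_lt g b -> order_lt (f * g) b.
Proof.
by move=> fb gb j bj; rewrite (derivationM (pder_derivation j)) fb ?gb ?mulr0 ?mul0r ?addr0.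
Qed.

Lemma order_lt_natr k b : order_lt k%:R b.
Proof. by move=> j _; apply: (derivation_natr (pder_derivation j)). Qed.

Lemma order_lt_pder f b i : order_lt f b -> order_lt (pd i f) b.
Proof. by move=> fb j bj; rewrite pderC fb ?pder0. Qed.

Lemma order_lt_dtot f b : order_lt f b -> order_lt (dt f) b.+1.
Proof.
by move=> fb [|j] // bj; rewrite pder_dtot fb // (fb j.+1) ?dtot0 ?addr0 // ltnW.
Qed.

Lemma pder_mull f g j : pd j f = 0 -> pd j (f * g) = f * pd j g.
Proof. by move=> fj; rewrite (derivationM (pder_derivation j)) fj mul0r add0r. Qed.

Lemma pder_mulr f g j : pd j g = 0 -> pd j (f * g) = pd j f * g.
Proof. by move=> gj; rewrite (derivationM (pder_derivation j)) gj mulr0 addr0. Qed.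

Lemma uvar_neq0 m : u m != 0.
Proof.
apply/eqP => um0; have := pder_uvar m m.
by rewrite um0 pder0 eqxx => /esym/eqP; rewrite oner_eq0.
Qed.

(* [opmul] with its index ranges padded to [b1] and [b2]: over a common range
   the bilinearity of [opmul] becomes termwise. *)
Definition opmul_upto b1 b2 (L M : {poly V}) : {poly V} :=
  \sum_(i < b1) \sum_(j < b2) \sum_(l < i.+1)
     (L`_i * 'C(i, l)%:R * iter l dt M`_j)%:P * 'X^(i + j - l).

Lemma opmul_uptoE b1 b2 L M : (size L <= b1)%N -> (size M <= b2)%N ->
  opmul D L M = opmul_upto b1 b2 L M.
Proof.
move=> Lb1 Mb2; rewrite /opmul /opmul_upto.
rewrite (@sumr_ord_widen _ (fun i => \sum_(j < size M) \sum_(l < i.+1)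
    (L`_i * 'C(i, l)%:R * iter l dt M`_j)%:P * 'X^(i + j - l)) _ _ Lb1); last first.
  move=> i /(nth_default 0) Li; apply: big1 => j _; apply: big1 => l _.
  by rewrite Li !(mul0r, polyC0).
apply: eq_bigr => i _; apply: (@sumr_ord_widen _ (fun j => \sum_(l < i.+1)
    (L`_i * 'C(i, l)%:R * iter l dt M`_j)%:P * 'X^(i + j - l)) _ _ Mb2).
move=> j /(nth_default 0) Mj; apply: big1 => l _.
by rewrite Mj iter_dtot0 !(mulr0, polyC0, mul0r).
Qed.

Lemma opmul_uptoDl b1 b2 M : {morph opmul_upto b1 b2 ^~ M : L1 L2 / L1 + L2}.
Proof.
move=> L1 L2; rewrite /opmul_upto -big_split; apply: eq_bigr => i _.
rewrite -big_split; apply: eq_bigr => j _; rewrite -big_split; apply: eq_bigr => l _.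
by rewrite coefD !mulrDl polyCD mulrDl.
Qed.

Lemma opmul_uptoDr b1 b2 L : {morph opmul_upto b1 b2 L : M1 M2 / M1 + M2}.
Proof.
move=> M1 M2; rewrite /opmul_upto -big_split; apply: eq_bigr => i _.
rewrite -big_split; apply: eq_bigr => j _; rewrite -big_split; apply: eq_bigr => l _.
by rewrite coefD (iter_addmorphD _ dtotD) !mulrDr polyCD mulrDl.
Qed.

Lemma opmulDl M : {morph opmul D ^~ M : L1 L2 / L1 + L2}.
Proof.
move=> L1 L2; rewrite !(@opmul_uptoE (maxn (size L1) (size L2)) (size M)) //.
- exact: opmul_uptoDl.
- exact: leq_maxr.
- exact: leq_maxl.
- exact: size_polyD.
Qed.

Lemma opmulDr L : {morph opmul D L : M1 M2 / M1 + M2}.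
Proof.
move=> M1 M2; rewrite !(@opmul_uptoE (size L) (maxn (size M1) (size M2))) //.
- exact: opmul_uptoDr.
- exact: leq_maxr.
- exact: leq_maxl.
- exact: size_polyD.
Qed.

Lemma opmul0l M : opmul D 0 M = 0.
Proof. exact: addmorph0 (opmulDl M). Qed.

Lemma opmul0r L : opmul D L 0 = 0.
Proof. exact: addmorph0 (opmulDr L). Qed.

Lemma opmul_monomial a b p q :
  opmul D (a%:P * 'X^p) (b%:P * 'X^q) =
  \sum_(l < p.+1) (a * 'C(p, l)%:R * iter l dt b)%:P * 'X^(p + q - l).
Proof.
rewrite (@opmul_uptoE p.+1 q.+1) ?size_monomial_leq // /opmul_upto big_ord_recr /=.
rewrite big1 ?add0r => [|i _]; last first.
  apply: big1 => j _; apply: big1 => l _.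
  by rewrite coefCM coefXn (ltn_eqF (ltn_ord i)) !(mulr0, mul0r, polyC0).
rewrite big_ord_recr /= big1 ?add0r => [|j _]; last first.
  apply: big1 => l _.
  by rewrite !coefCM !coefXn (ltn_eqF (ltn_ord j)) mulr0 iter_dtot0 !(mulr0, polyC0, mul0r).
by apply: eq_bigr => l _; rewrite !coefCM !coefXn !eqxx !mulr1.
Qed.

Lemma coef_opmul_eq0 L M e : (size L + size M <= e.+1)%N -> (opmul D L M)`_e = 0.
Proof.
move=> LMe; rewrite /opmul !coef_sum; apply: big1 => i _.
rewrite coef_sum; apply: big1 => j _; rewrite coef_sum; apply: big1 => l _.
rewrite coefCM coefXn; case: eqP; rewrite ?mulr0 // => eij.
by have := ltn_ord i; have := ltn_ord j; lia.
Qed.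

Lemma coef_opmul_top L M p q : (size L <= p.+1)%N -> (size M <= q.+1)%N ->
  (opmul D L M)`_(p + q) = L`_p * M`_q.
Proof.
move=> /poly_top_split[eL sL'] /poly_top_split[eM sM'].
move: (L`_p) (L - _) eL sL' => a L' -> sL'.
move: (M`_q) (M - _) eM sM' => b M' -> sM'.
rewrite opmulDl !opmulDr !coefD (@coef_opmul_eq0 L' M'); last exact/leqW/leq_add.
rewrite (@coef_opmul_eq0 L'); last by rewrite -addnS leq_add ?size_monomial_leq.
rewrite (@coef_opmul_eq0 _ M'); last by rewrite -addSn leq_add ?size_monomial_leq.
rewrite !addr0 opmul_monomial coef_sum big_ord_recl big1 => [|l _].
  by rewrite coefCM coefXn bin0 subn0 eqxx /= !mulr1 addr0.
by rewrite coefCM coefXn lift0 (_ : (p + q == _)%N = false) ?mulr0 //; have := ltn_ord l; lia.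
Qed.

Lemma coef_opmul_monomial_subtop a b p q : (0 < p + q)%N ->
  (opmul D (a%:P * 'X^p) (b%:P * 'X^q))`_(p + q).-1 = a * p%:R * dt b.
Proof.
move=> pq; rewrite opmul_monomial coef_sum; case: p pq => [|p] pq.
  rewrite big_ord1 coefCM coefXn subn0 add0n (_ : (q.-1 == q) = false) //; last by lia.
  by rewrite !mulr0n !mulr0 mul0r.
rewrite big_ord_recl big_ord_recl big1 ?addr0 => [|l _]; last first.
  rewrite coefCM coefXn !lift0 (_ : (_ == _)%N = false) ?mulr0n ?mulr0 //.
  by have := ltn_ord l; lia.
rewrite !coefCM !coefXn !lift0 bin1 subn0 /= (_ : (_ == p.+1 + q)%N = false); last by lia.
by rewrite (_ : (_ == p.+1 + q - 1)%N = true) ?mulr0n ?mulr0 ?add0r ?mulr1 //; lia.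
Qed.

Lemma coef_opmul_subtop L M p q :
  (size L <= p.+1)%N -> (size M <= q.+1)%N -> (0 < p + q)%N ->
  (opmul D L M)`_(p + q).-1 =
  L`_p * p%:R * dt M`_q + L`_p * M`_q.-1 *+ (0 < q)%N + L`_p.-1 * M`_q *+ (0 < p)%N.
Proof.
move=> /poly_top_split[eL sL'] /poly_top_split[eM sM'] pq.
move: (L`_p) (L - _) eL sL' => a L' -> sL'.
move: (M`_q) (M - _) eM sM' => b M' -> sM'.
have top_a_M' : (opmul D (a%:P * 'X^p) M')`_(p + q).-1 =
    a * (b%:P * 'X^q + M')`_q.-1 *+ (0 < q)%N.
  case: q pq sM' => [|q] pq sM'.
    by move/size_poly_leq0P: sM' ->; rewrite opmul0r coef0.
  rewrite addnS coef_opmul_top ?size_monomial_leq // coefD !coefCM !coefXn eqxx.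
  by rewrite (_ : (q == q.+1) = false) ?mulr0 ?add0r ?mulr1 //; lia.
have top_L'_b : (opmul D L' (b%:P * 'X^q))`_(p + q).-1 =
    (a%:P * 'X^p + L')`_p.-1 * b *+ (0 < p)%N.
  case: p pq sL' top_a_M' => [|p] pq sL' _.
    by move/size_poly_leq0P: sL' ->; rewrite opmul0l coef0.
  rewrite addSn coef_opmul_top ?size_monomial_leq // coefD !coefCM !coefXn eqxx.
  by rewrite (_ : (p == p.+1) = false) ?mulr0 ?add0r ?mulr1 //; lia.
rewrite opmulDl !opmulDr !coefD (@coef_opmul_eq0 L' M'); last by rewrite prednK // leq_add.
by rewrite addr0 coef_opmul_monomial_subtop // top_a_M' top_L'_b !coefD.
Qed.

Lemma opmul_suml (I : Type) (r : seq I) (P : pred I) (F : I -> {poly V}) M :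
  opmul D (\sum_(i <- r | P i) F i) M = \sum_(i <- r | P i) opmul D (F i) M.
Proof. exact: (big_morph _ (opmulDl M) (opmul0l M)). Qed.

Lemma opmul_sumr (I : Type) (r : seq I) (P : pred I) (F : I -> {poly V}) L :
  opmul D L (\sum_(i <- r | P i) F i) = \sum_(i <- r | P i) opmul D L (F i).
Proof. exact: (big_morph _ (opmulDr L) (opmul0r L)). Qed.

Lemma opmulBr L : {morph opmul D L : M1 M2 / M1 - M2}.
Proof. exact: addmorphB (opmulDr L). Qed.

Lemma opmulXnr L m : opmul D L 'X^m = L * 'X^m.
Proof.
rewrite (@opmul_uptoE (size L) m.+1) ?size_polyXn // /opmul_upto.
rewrite [in RHS](poly_monomial_sum L) mulr_suml; apply: eq_bigr => i _.
rewrite big_ord_recr /= big1 ?add0r => [|j _]; last first.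
  apply: big1 => l _.
  by rewrite coefXn (ltn_eqF (ltn_ord j)) iter_dtot0 !(mulr0, polyC0, mul0r).
rewrite big_ord_recl big1 ?addr0 => [|l _]; last first.
  by rewrite coefXn eqxx iter_dtot1 // !(mulr0, polyC0, mul0r).
by rewrite coefXn eqxx bin0 subn0 /= !mulr1 -mulrA -exprD.
Qed.

Lemma opmul_monomial_mulXnl a b i j m :
  opmul D (a%:P * 'X^(i + m)) (b%:P * 'X^j) =
  opmul D (a%:P * 'X^i) (opmul D 'X^m (b%:P * 'X^j)).
Proof.
pose g s := (a * iter s dt b)%:P * 'X^(i + m + j - s).
rewrite opmul_monomial (_ : 'X^m = 1%:P * 'X^m); last by rewrite polyC1 mul1r.
rewrite opmul_monomial opmul_sumr.
transitivity (\sum_(s < (i + m).+1) g s *+ 'C(i + m, s)).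
  by apply: eq_bigr => s _; rewrite /g -mulrnAl -polyCMn mulrAC mulr_natr.
rewrite -sumr_bin_convolution; apply: eq_bigr => l _.
rewrite opmul_monomial -sumrMnl; apply: eq_bigr => r _.
rewrite /g -!mulrnAl -!polyCMn mul1r mulr_natl (addmorphMn (iter_addmorphD _ dtotD)) -iterD.
have lm := ltn_ord l; rewrite (_ : (i + (m + j - l) - r = i + m + j - (l + r))%N); last by lia.
by rewrite (addnC r l) mulr_natr mulrnAr mulrnAl.
Qed.

Lemma opmul_mulXnl L M m : opmul D (L * 'X^m) M = opmul D L (opmul D 'X^m M).
Proof.
have LXm : L * 'X^m = \sum_(i < size L) (L`_i)%:P * 'X^(i + m).
  rewrite [in LHS](poly_monomial_sum L) mulr_suml.
  by apply: eq_bigr => i _; rewrite -mulrA -exprD.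
rewrite LXm opmul_suml [in RHS](poly_monomial_sum L) opmul_suml; apply: eq_bigr => i _.
(* Naming 'X^m stops [opmul_sumr] from unfolding the inner [opmul] into its sum. *)
rewrite (poly_monomial_sum M) (opmul_sumr _ _ _ 'X^m) !opmul_sumr; apply: eq_bigr => j _.
exact: opmul_monomial_mulXnl.
Qed.

Lemma coef_frechet f j : (frechet D f)`_j = pd j f.
Proof. by rewrite coef_poly; case: ltnP => // /pder_pbound ->. Qed.

Lemma frechet_uvar m : frechet D (u m) = 'X^m.
Proof. by apply/polyP => j; rewrite coef_frechet pder_uvar coefXn. Qed.

Lemma opapply_uvar L m : opapply D L (u m) = \sum_(k < size L) L`_k * u (k + m).
Proof. by apply: eq_bigr => k _; rewrite iter_dtot_uvar. Qed.

Lemma frechet_opapply_uvar L n m : (n < m)%N -> (forall k, order_lt L`_k n.+1) ->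
  frechet D (opapply D L (u m)) =
  \poly_(j < n.+1) (\sum_(k < size L) pd j L`_k * u (k + m)) + L * 'X^m.
Proof.
move=> nm Ln; apply/polyP => j.
rewrite coef_frechet coefD coef_poly coefMXn opapply_uvar.
rewrite (derivation_sum (pder_derivation j)).
under eq_bigr => k _ do rewrite (derivationM (pder_derivation j)) pder_uvar.
rewrite big_split /=; congr (_ + _).
  by case: ltnP => // nj; apply: big1 => k _; rewrite Ln // mul0r.
case: ltnP => jm.
  by apply: big1 => k _; rewrite (_ : (j == k + m)%N = false) ?mulr0 //; lia.
have jk k : (j == k + m)%N = (k == j - m)%N by apply/eqP/eqP; lia.
under eq_bigr => k _ do rewrite jk.
by rewrite (sumr_ord_delta (fun k => L`_k)); case: ltnP => // /(nth_default 0) ->.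
Qed.

Lemma pder_sum_mul_uvar (c : nat -> V) K m j :
  (forall k, order_lt (c k) m) -> (forall k, (K <= k)%N -> c k = 0) ->
  pd (j + m) (\sum_(k < K) c k * u (k + m)) = c j.
Proof.
move=> cm cK; rewrite (derivation_sum (pder_derivation _)).
under eq_bigr => k _ do rewrite (derivationM (pder_derivation _)) cm ?leq_addl //
  mul0r add0r pder_uvar eqn_add2r eq_sym.
by rewrite (sumr_ord_delta c); case: ltnP => // /cK.
Qed.

Lemma hereditary_coef_commute A m K e : hereditary D A ->
  frechet D (opapply D A (u m)) = K + A * 'X^m -> (size A + size A <= e.+1)%N ->
  (opmul D K A)`_e = (opmul D A K)`_e.
Proof.
move=> herA DF Ae.
have evX0 f : (evXop D f A)`_e = 0.
  by rewrite nth_default // (leq_trans (size_poly _ _)) //; lia.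
have := herA (u m).
rewrite /lieder DF frechet_uvar !opmulBr opmulDl opmulDr opmulXnr opmul_mulXnl.
move/(congr1 (fun P : {poly V} => P`_e)); rewrite !coefB !coefD evX0.
rewrite (@coef_opmul_eq0 A (evXop D (u m) A)); last first.
  exact: leq_trans (leq_add (leqnn _) (size_poly _ _)) Ae.
set k := (opmul D K A)`_e; set c := (opmul D A K)`_e.
set x := (opmul D A (opmul D 'X^m A))`_e; set y := (opmul D A (A * 'X^m))`_e.
move=> E; apply/esym; transitivity (k + ((0 - (k + x - (c + y))) - (0 - (x - y)))).
  by ring.
by rewrite E subrr addr0.
Qed.

Lemma hereditary_dtot_identity A N n : hereditary D A -> size A = N.+1 ->
  (N.+2 <= n)%N -> (forall k, order_lt A`_k n.+1) ->
  A`_N * N%:R * dt (\sum_(k < N.+1) pd n A`_k * u (k + n.+2)) =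
  (\sum_(k < N.+1) pd n A`_k * u (k + n.+2)) * n%:R * dt A`_N.
Proof.
move=> herA sizeA Nn An; set d := \sum_(k < N.+1) _.
pose K := \poly_(j < n.+1) \sum_(k < size A) pd j A`_k * u (k + n.+2).
have sizeK : (size K <= n.+1)%N by apply: size_poly.
have Kn : K`_n = d by rewrite coef_poly ltnSn sizeA.
have Ae : (size A + size A <= (N + n).-1.+1)%N by rewrite sizeA; lia.
have := hereditary_coef_commute herA (frechet_opapply_uvar (leqW (ltnSn n)) An) Ae.
rewrite -/K -[in X in X = _](addnC n N) !coef_opmul_subtop ?sizeA //; try lia.
rewrite Kn (_ : (0 < n)%N = true) ?mulr1n; last by lia.
rewrite (mulrC d A`_N.-1) (mulrC K`_n.-1 A`_N) => E.
apply: (addIr (A`_N * K`_n.-1 + A`_N.-1 * d *+ (0 < N)%N)).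
by rewrite !addrA -E addrAC.
Qed.

Lemma hereditary_pder_recursion A N n j : hereditary D A -> size A = N.+1 ->
  (N.+2 <= n)%N -> (forall k, order_lt A`_k n.+1) ->
  A`_N * N%:R * (pd n A`_j + dt (pd n A`_j.+1)) = pd n A`_j.+1 * n%:R * dt A`_N.
Proof.
move=> herA sizeA Nn An.
have c_ord k : order_lt (pd n A`_k) n.+2 := order_lt_leq (leqnSn _) (order_lt_pder n (An k)).
have cN k : (N.+1 <= k)%N -> pd n A`_k = 0.
  by move=> Nk; rewrite nth_default ?sizeA ?pder0.
have pd_d k := pder_sum_mul_uvar k c_ord cN.
have AN_ord : order_lt (A`_N * N%:R) n.+2 :=
  order_lt_leq (leqnSn _) (order_ltM (An N) (@order_lt_natr N n.+1)).
have := congr1 (pd (j.+1 + n.+2)) (hereditary_dtot_identity herA sizeA Nn An).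
rewrite (pder_mull (f := A`_N * N%:R)) ?AN_ord ?leq_addl // addSn pder_dtot -addSn !pd_d.
rewrite pder_mulr ?(order_lt_dtot (An N)) ?leq_addl //.
by rewrite pder_mulr ?pd_d // (derivation_natr (pder_derivation _)).
Qed.

Hypothesis natr_neq0 : forall j, (0 < j)%N -> j%:R != 0 :> V.

Lemma hereditary_top_pder_eq0 A N n : hereditary D A -> size A = N.+1 ->
  (N.+2 <= n)%N -> (forall k, order_lt A`_k n.+1) -> forall k, pd n A`_k = 0.
Proof.
move=> herA sizeA Nn An.
have cN k : (N.+1 <= k)%N -> pd n A`_k = 0.
  by move=> Nk; rewrite nth_default ?sizeA ?pder0.
have n_neq0 : n%:R != 0 :> V by apply: natr_neq0; lia.
have [N0 | N_gt0] := posnP N.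
  suff c0 : pd n A`_0 = 0 by case=> [|k] //; apply: cN; rewrite N0.
  have := hereditary_dtot_identity herA sizeA Nn An.
  rewrite N0 mulr0 mul0r big_ord1 add0n => /esym/eqP.
  rewrite !mulf_eq0 (negbTE n_neq0) (negbTE (uvar_neq0 _)) !orbF.
  case/orP => [/eqP // | /eqP dA0].
  have := pder_dtot n.+1 A`_0.
  by rewrite dA0 pder0 (An 0%N n.+1) // dtot0 addr0.
have AN_neq0 : A`_N != 0.
  by rewrite -[N]/(N.+1.-1) -sizeA -lead_coefE lead_coef_eq0 -size_poly_eq0 sizeA.
have c_eq0 i k : (N.+1 <= i + k)%N -> pd n A`_k = 0.
  elim: i k => [|i IH] k; first exact: cN.
  rewrite addSnnS => /IH ck1.
  have := hereditary_pder_recursion k herA sizeA Nn An.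
  rewrite ck1 dtot0 addr0 !mul0r => /eqP.
  by rewrite !mulf_eq0 (negbTE AN_neq0) (negbTE (natr_neq0 N_gt0)) => /eqP.
by move=> k; apply: (c_eq0 N.+1); rewrite leq_addr.
Qed.

Lemma leq_dord f j : pd j f != 0 -> (j <= dord D f)%N.
Proof.
move=> fj; have jb : (j < pbound D f)%N.
  by rewrite ltnNge; apply: contra fj => /pder_pbound ->.
exact: (@leq_bigmax_cond _ (fun i : 'I_(pbound D f) => pd i f != 0) _ (Ordinal jb)).
Qed.

Lemma order_lt_dord f : order_lt f (dord D f).+1.
Proof. by move=> j dj; apply/eqP; apply: contraTT dj => /leq_dord; rewrite -leqNgt. Qed.

Lemma pder_dord_neq0 f : (0 < dord D f)%N -> pd (dord D f) f != 0.
Proof.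
rewrite /dord; have [/card0_eq f0 | ] := posnP #|(fun i : 'I_(pbound D f) => pd i f != 0)|.
  by rewrite big_pred0 // => i; apply/negbTE/negP => fi; have := f0 i; rewrite unfold_in fi.
move=> /(eq_bigmax_cond (fun i : 'I_(pbound D f) => nat_of_ord i))[i0 fi0 ->] _.
by move: fi0; rewrite unfold_in.
Qed.

Lemma hereditary_dord_le A N : size A = N.+1 -> hereditary D A ->
  forall k, (k <= N)%N -> (dord D A`_k <= N.+1)%N.
Proof.
move=> sizeA herA k kN; pose n := \max_(i < N.+1) dord D A`_i.
have dord_le_n i : (i <= N)%N -> (dord D A`_i <= n)%N.
  move=> iN.
  exact: (@leq_bigmax _ (fun i : 'I_N.+1 => dord D A`_i) (Ordinal (iN : i < N.+1)%N)).
apply: leq_trans (dord_le_n k kN) _; rewrite leqNgt; apply/negP => Nn.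
have [i0 n_eq] := @eq_bigmax _ (fun i : 'I_N.+1 => dord D A`_i) (ltac:(by rewrite card_ord)).
have n_i0 : n = dord D A`_i0 := n_eq.
have An i : order_lt A`_i n.+1.
  move=> j nj; have [iN | Ni] := leqP i N; last by rewrite nth_default ?sizeA ?pder0.
  by apply: order_lt_dord; apply: leq_ltn_trans (dord_le_n i iN) nj.
have := hereditary_top_pder_eq0 herA sizeA Nn An i0; rewrite n_i0; apply/eqP/pder_dord_neq0.
by rewrite -n_i0; lia.
Qed.

End DifferentialFunctions.

Theorem proposition2p20 (R : realType) (V : idomainType)
    (emb : {rmorphism R[i] -> V}) (D : dfdata V)
    (HV : diff_fun_alg emb D) (Hnormal : normal_domain V)
    (Hconst : constants_alg_closed D)
    (A : {poly V}) (N : nat) (HN : size A = N.+1)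
    (Hher : hereditary D A) :
  forall k : nat, (k <= N)%N -> (dord D A`_k <= N.+1)%N.
Proof.
case: HV => [[pder_der xder_der] _ [pder_uvar xder_uvar] [pderC pder_xder] pder_pbound].
have natr_neq0 j : (0 < j)%N -> j%:R != 0 :> V.
  by move=> j_gt0; rewrite -(rmorph_nat emb) fmorph_eq0 pnatr_eq0 -lt0n.
by apply: hereditary_dord_le.
Qed.
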